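(* Let $K$ be a non-Archimedean locally compact field of characteristic $p>0$ with group of 1-units $U=1+M_K$, and let $\Lambda$ be the set of locally analytic group endomorphisms $U\to U$. Let $f\in\Lambda$ with $f(1+x)=\sum_{n=0}^{\infty}a_nx^n$ for all $x\in M_K$, where $\sum a_nx^n\in 1+x\mathbb{F}_p[[x]]$. Then for each $n\ge0$, $a_n=0$ if and only if the Hasse derivative $\mathsf{D}^{(n)}f(1+x)$ is identically zero. In particular, $a_1=0$ if and only if $f(1+x)=g(1+x)^p$ for some $g\in\Lambda$.
   Context: $M_K$ is the maximal ideal of the ring of integers $R_K$ of $K$; with constant field $\mathbb{F}$ of order $q$ and uniformizer $\pi$, $K=\mathbb{F}((\pi))$, $U=1+\pi\mathbb{F}[[\pi]]$, and $|x|=q^{-v(x)}$. A continuous function $f$ on a ball $B_{\alpha,t}=\{u\in R_K:|u-\alpha|\le t\}$, $t=|\rho|$, is analytic there if $f(u)=\sum_{n\ge0}c_n\left(\frac{u-\alpha}{\rho}\right)^n$ with $c_n\in K$, $c_n\to0$; $f:U\to K$ is locally analytic if each $\alpha\in U$ has a ball $B_{\alpha,t_\alpha}\subset U$, $t_\alpha>0$, on which $f$ is analytic. The Hasse derivative of order $m$ of $f(1+x)=\sum_k a_kx^k$ is $\mathsf{D}^{(m)}f(1+x)=\sum_{k\ge m}\binom{k}{m}a_kx^{k-m}$. *)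

(* K = F((pi)) with F a finite field; elements of R_K = F[[pi]]
   are coefficient sequences nat -> F; elements of K are represented as
   pi^(-e) * s with e : nat and s in R_K. *)
From HB Require Import structures.
From mathcomp Require Import all_boot all_order all_algebra all_field.
Set Implicit Arguments. Unset Strict Implicit. Unset Printing Implicit Defensive.
Import Order.TTheory GRing.Theory Num.Theory.
Local Open Scope ring_scope.

Definition ps (F : Type) := nat -> F.

Definition ps_zero (F : nzRingType) : ps F := fun _ => 0.
Definition ps_one (F : nzRingType) : ps F := fun k => (k == 0%N)%:R.
Definition ps_add (F : nzRingType) (s t : ps F) : ps F := fun k => s k + t k.
Definition ps_sub (F : nzRingType) (s t : ps F) : ps F := fun k => s k - t k.
Definition ps_mul (F : nzRingType) (s t : ps F) : ps F :=
  fun k => \sum_(i < k.+1) s i * t (k - i)%N.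
Definition ps_exp (F : nzRingType) (s : ps F) (n : nat) : ps F :=
  iter n (ps_mul s) (ps_one F).

Definition in_M (F : nzRingType) (x : ps F) : Prop := x 0%N = 0.
Definition in_U (F : nzRingType) (u : ps F) : Prop := u 0%N = 1.

(* ball B_{alpha,|rho|} = {u in R_K : v(u - alpha) >= v(rho)} *)
Definition in_ball (F : nzRingType) (alpha rho u : ps F) : Prop :=
  forall i, (forall j, (j <= i)%N -> rho j = 0) -> u i - alpha i = 0.

Definition laurent (F : Type) := (nat * ps F)%type.

Definition lcoef (F : nzRingType) (c : laurent F) (j : int) : F :=
  match (j + (c.1)%:Z)%R with Posz k => c.2 k | Negz _ => 0 end.
Definition pcoef (F : nzRingType) (s : ps F) (j : int) : F :=
  match j with Posz k => s k | Negz _ => 0 end.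

Definition tends_to_zero (F : nzRingType) (c : nat -> laurent F) : Prop :=
  forall B : nat, exists N : nat, forall n, (N <= n)%N ->
    forall j : int, j < B%:Z -> lcoef (c n) j = 0.

Definition series_sum (F : nzRingType) (t : nat -> laurent F) (S : ps F) : Prop :=
  forall j : int, exists N : nat, forall M, (N <= M)%N ->
    \sum_(n < M) lcoef (t n) j = pcoef S j.

Definition continuous_on_ball (F : nzRingType) (f : ps F -> ps F) (alpha rho : ps F) : Prop :=
  forall u, in_ball alpha rho u -> forall N : nat, exists M : nat,
    forall v, in_ball alpha rho v -> (forall i, (i < M)%N -> u i = v i) ->
      forall i, (i < N)%N -> f u i = f v i.

(* f(u) = sum_n c_n ((u - alpha)/rho)^n on the ball, c_n in K, c_n -> 0 *)
Definition analytic_on_ball (F : nzRingType) (f : ps F -> ps F) (alpha rho : ps F) : Prop :=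
  continuous_on_ball f alpha rho /\
  exists c : nat -> laurent F, tends_to_zero c /\
    forall u w, in_ball alpha rho u -> ps_mul rho w = ps_sub u alpha ->
      series_sum (fun n => ((c n).1, ps_mul (c n).2 (ps_exp w n))) (f u).

Definition locally_analytic (F : nzRingType) (f : ps F -> ps F) : Prop :=
  forall alpha, in_U alpha -> exists rho : ps F,
    rho <> ps_zero F /\ (forall u, in_ball alpha rho u -> in_U u) /\
    analytic_on_ball f alpha rho.

Definition U_endo (F : nzRingType) (f : ps F -> ps F) : Prop :=
  (forall u, in_U u -> in_U (f u)) /\
  (forall u v, in_U u -> in_U v -> f (ps_mul u v) = ps_mul (f u) (f v)).

Definition in_Lambda (F : nzRingType) (f : ps F -> ps F) : Prop :=
  U_endo f /\ locally_analytic f.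

Definition pseries_eval (F : nzRingType) (a : nat -> F) (x S : ps F) : Prop :=
  series_sum (fun n => (0%N, fun k => a n * ps_exp x n k)) S.

Definition hasse (F : nzRingType) (a : nat -> F) (m : nat) : ps F :=
  fun j => ('C(j + m, m))%:R * a (j + m)%N.

From HB Require Import structures.
From mathcomp Require Import all_boot all_order all_algebra all_field.
From Stdlib Require Import FunctionalExtensionality.
From mathcomp Require Import zify ring.
Set Implicit Arguments. Unset Strict Implicit. Unset Printing Implicit Defensive.
Import GRing.Theory.
Local Open Scope ring_scope.

(* Write f(1+x) = A(x) = sum a_n x^n.  Expanding f((1+x)(1+y)) = f(1+x) f(1+y) in y
   by Taylor's formula and comparing coefficients of y^m gives (1+x)^m D^(m)A = a_m A;
   as (1+x)^m is a unit and the constant term of D^(m)A is a_m, D^(m)A vanishes exactly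
   when a_m does.  Only one-variable series are at hand, so y is specialised to pi^N:
   for N beyond the coefficient under study the powers of y occupy disjoint blocks of
   coefficients, and the identity follows by induction on m.
   If a_1 = 0 then n a_n = 0, so a_n = 0 unless p | n; as the a_n lie in F_p,
   A(x) = B(x)^p with B(x) = sum a_(pn) x^n.  Then g(u) = B(u - 1) is multiplicative
   because Frobenius is injective, and analytic around every alpha in U because
   g(u) = g(alpha) g(1 + (u - alpha)/alpha).  Conversely, the coefficient of x in
   g(1+x)^p is p g_1 = 0. *)

Lemma sum_ord_widen0 (V : nmodType) (G : nat -> V) m n :
  (m <= n)%N -> (forall i, (m <= i)%N -> G i = 0) ->
  \sum_(i < m) G i = \sum_(i < n) G i.
Proof.
move=> le_mn G0; rewrite (big_ord_widen n G le_mn) [LHS]big_mkcond /=.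
by apply: eq_bigr => i _; case: ifP => // /negbT; rewrite -leqNgt => /G0 ->.
Qed.

Lemma sum_ord_multiples (V : nmodType) (G : nat -> V) p k : (0 < p)%N ->
  (forall n, ~~ (p %| n)%N -> G n = 0) ->
  \sum_(n < p * k) G n = \sum_(i < k) G (p * i)%N.
Proof.
move=> p_gt0 G0; elim: k => [|k IH]; first by rewrite muln0 !big_ord0.
rewrite big_ord_recr /= -IH -!(big_mkord xpredT).
rewrite (big_cat_nat (n := p * k)) //=; last by rewrite leq_mul2l leqnSn orbT.
congr (_ + _); rewrite mulnS addnC big_ltn; last by rewrite -addn1 leq_add2l.
rewrite big1_seq ?addr0 // => n /andP[_]; rewrite mem_index_iota => /andP[lo hi].
apply: G0; apply/negP => /dvdnP[q def_n]; move: lo hi; rewrite def_n.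
by rewrite (mulnC p k) ltn_pmul2r // -mulSnr ltn_pmul2r // => /leq_gtF ->.
Qed.

Section PolyLowCoefficients.
Variable R : nzRingType.
Implicit Types p q : {poly R}.

Definition eqmodXn n p q : Prop := forall i, (i < n)%N -> p`_i = q`_i.

Lemma eqmodXn_refl n p : eqmodXn n p p.
Proof. by []. Qed.

Lemma eqmodXn_sym n p q : eqmodXn n p q -> eqmodXn n q p.
Proof. by move=> e i lt_in; rewrite e. Qed.

Lemma eqmodXn_trans n p q r : eqmodXn n p q -> eqmodXn n q r -> eqmodXn n p r.
Proof. by move=> e1 e2 i lt_in; rewrite e1 // e2. Qed.

Lemma eqmodXnW m n p q : (m <= n)%N -> eqmodXn n p q -> eqmodXn m p q.
Proof. by move=> le_mn e i lt_im; apply: e; apply: leq_trans le_mn. Qed.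

Lemma eqmodXnD n p q p' q' :
  eqmodXn n p p' -> eqmodXn n q q' -> eqmodXn n (p + q) (p' + q').
Proof. by move=> e1 e2 i lt_in; rewrite !coefD e1 // e2. Qed.

Lemma eqmodXnB n p q p' q' :
  eqmodXn n p p' -> eqmodXn n q q' -> eqmodXn n (p - q) (p' - q').
Proof. by move=> e1 e2 i lt_in; rewrite !coefB e1 // e2. Qed.

Lemma eqmodXnM n p q p' q' :
  eqmodXn n p p' -> eqmodXn n q q' -> eqmodXn n (p * q) (p' * q').
Proof.
move=> e1 e2 i lt_in; rewrite !coefM; apply: eq_bigr => -[j /= lt_ji] _.
by rewrite e1 ?e2 //; lia.
Qed.

Lemma eqmodXnX n p p' k : eqmodXn n p p' -> eqmodXn n (p ^+ k) (p' ^+ k).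
Proof. by move=> e; elim: k => [|k IH] //; rewrite !exprS; apply: eqmodXnM. Qed.

Lemma eqmodXn_unit_mul0 n p q : p`_0 = 1 -> eqmodXn n (p * q) 0 -> eqmodXn n q 0.
Proof.
move=> p0 e i; elim/ltn_ind: i => i IH lt_in.
have := e i lt_in; rewrite coefM big_ord_recl /= p0 mul1r subn0 coef0 big1 ?addr0 //.
by move=> [j /= lt_ji] _; rewrite IH ?coef0 ?mulr0 // /bump /=; lia.
Qed.

Lemma coef_expr_valuation p v :
  (forall j, (j < v)%N -> p`_j = 0) ->
  forall k, (forall i, (i < k * v)%N -> (p ^+ k)`_i = 0) /\
            (p ^+ k)`_(k * v) = p`_v ^+ k.
Proof.
move=> p_low; elim=> [|k [IHlow IHval]].
  by split => [i|]; rewrite ?mul0n // expr0 coef1.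
have low : forall i, (i < k.+1 * v)%N -> (p ^+ k.+1)`_i = 0.
  move=> i lt_i; rewrite exprS coefM big1 // => -[j /= lt_ji] _.
  case: (ltnP j v) => [/p_low -> | le_vj]; first by rewrite mul0r.
  by rewrite IHlow ?mulr0 //; rewrite mulSn in lt_i; lia.
split => //; rewrite exprS coefM.
have lt_v : (v < (k.+1 * v).+1)%N by rewrite ltnS mulSn leq_addr.
rewrite (bigD1 (Ordinal lt_v)) //= big1 ?addr0; first by rewrite mulSn addKn IHval exprS.
move=> [j /= lt_j] ne_jv.
case: (ltnP j v) => [/p_low -> | le_vj]; first by rewrite mul0r.
have {ne_jv} ne : j <> v by move=> e; move: ne_jv; rewrite -val_eqE /= e eqxx.
by rewrite IHlow ?mulr0 //; move: lt_j; rewrite mulSn; lia.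
Qed.

Lemma coef_expr_low p k i : p`_0 = 0 -> (i < k)%N -> (p ^+ k)`_i = 0.
Proof.
move=> p0 lt_ik; have p_low : forall j, (j < 1)%N -> p`_j = 0 by case.
by have [low _] := coef_expr_valuation p_low k; apply: low; rewrite muln1.
Qed.

Lemma coef0_expr1 p k : p`_0 = 1 -> (p ^+ k)`_0 = 1.
Proof. by move=> p0; elim: k => [|k IH]; rewrite ?expr0 ?coef1 // exprS coef0M p0 IH mulr1. Qed.

End PolyLowCoefficients.

Lemma coef1_expr1 (R : comNzRingType) (p : {poly R}) k :
  p`_0 = 1 -> (p ^+ k)`_1 = k%:R * p`_1.
Proof.
move=> p0; elim: k => [|k IH]; first by rewrite expr0 coef1 mul0r.
rewrite exprS coefM big_ord_recr big_ord_recl big_ord0 /= IH coef0_expr1 // p0.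
by rewrite mulrSr; ring.
Qed.

Section PowerSeriesTruncation.
Variable R : nzRingType.
Implicit Types (s t u v x : ps R) (a : nat -> R).

Definition ps_trunc n s : {poly R} := \poly_(i < n) s i.

Lemma coef_ps_trunc n s i : (i < n)%N -> (ps_trunc n s)`_i = s i.
Proof. by move=> lt_in; rewrite coef_poly lt_in. Qed.

Lemma ps_truncE n s : ps_trunc n s = \sum_(i < n) (s i)%:P * 'X^i.
Proof. by rewrite /ps_trunc poly_def; apply: eq_bigr => i _; rewrite mul_polyC. Qed.

Lemma eqmodXn_ps_trunc m n n' s :
  (m <= n)%N -> (m <= n')%N -> eqmodXn m (ps_trunc n s) (ps_trunc n' s).
Proof. by move=> le_mn le_mn' i lt_im; rewrite !coef_ps_trunc //; lia. Qed.

Lemma ps_trunc_inj s t : (forall n, eqmodXn n (ps_trunc n s) (ps_trunc n t)) -> s = t.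
Proof.
move=> e; apply: functional_extensionality => k.
by have := e k.+1 k (ltnSn k); rewrite !coef_ps_trunc.
Qed.

Lemma ps_truncD n s t : eqmodXn n (ps_trunc n (ps_add s t)) (ps_trunc n s + ps_trunc n t).
Proof. by move=> i lt_in; rewrite coefD !coef_ps_trunc. Qed.

Lemma ps_truncB n s t : eqmodXn n (ps_trunc n (ps_sub s t)) (ps_trunc n s - ps_trunc n t).
Proof. by move=> i lt_in; rewrite coefB !coef_ps_trunc. Qed.

Lemma ps_truncZ n (c : R) s : eqmodXn n (ps_trunc n (fun k => c * s k)) (c%:P * ps_trunc n s).
Proof. by move=> i lt_in; rewrite coefCM !coef_ps_trunc. Qed.

Lemma ps_truncM n s t : eqmodXn n (ps_trunc n (ps_mul s t)) (ps_trunc n s * ps_trunc n t).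
Proof.
move=> i lt_in; rewrite coef_ps_trunc // coefM; apply: eq_bigr => -[j /= lt_ji] _.
by rewrite !coef_ps_trunc //; lia.
Qed.

Lemma ps_trunc1 n : eqmodXn n (ps_trunc n (ps_one R)) 1.
Proof. by move=> i lt_in; rewrite coef_ps_trunc // coef1. Qed.

Lemma ps_truncX n s k : eqmodXn n (ps_trunc n (ps_exp s k)) (ps_trunc n s ^+ k).
Proof.
elim: k => [|k IH]; first exact: ps_trunc1.
rewrite exprS; apply: eqmodXn_trans (ps_truncM s (ps_exp s k)) _.
exact: eqmodXnM (eqmodXn_refl _) IH.
Qed.

Definition ps_pi : ps R := fun k => (k == 1%N)%:R.

Lemma ps_trunc_pi n : eqmodXn n (ps_trunc n ps_pi) 'X.
Proof. by move=> i lt_in; rewrite coef_ps_trunc // coefX. Qed.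

Lemma ps_pi_neq0 : ps_pi <> ps_zero R.
Proof. by move/(congr1 (fun s => s 1%N)) => /eqP; rewrite /ps_pi /ps_zero oner_eq0. Qed.

Lemma in_M_pi : in_M ps_pi.
Proof. by []. Qed.

Lemma coef0_ps_trunc_M n x : in_M x -> (ps_trunc n x)`_0 = 0.
Proof.
by case: n => [|n] x0; [rewrite /ps_trunc poly_def big_ord0 coef0 | rewrite coef_ps_trunc].
Qed.

Lemma ps_exp_M_low x k i : in_M x -> (i < k)%N -> ps_exp x k i = 0.
Proof.
move=> x0 lt_ik; rewrite -(coef_ps_trunc (n := i.+1)) // (ps_truncX _ _ (ltnSn i)).
by apply: coef_expr_low => //; apply: coef0_ps_trunc_M.
Qed.

Lemma ps_add1_sub1 u : u = ps_add (ps_one R) (ps_sub u (ps_one R)).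
Proof. by apply: functional_extensionality => k; rewrite /ps_add /ps_sub addrC subrK. Qed.

Lemma ps_sub1_add1 x : ps_sub (ps_add (ps_one R) x) (ps_one R) = x.
Proof. by apply: functional_extensionality => k; rewrite /ps_add /ps_sub addrC addKr. Qed.

Lemma in_M_sub1 u : in_U u -> in_M (ps_sub u (ps_one R)).
Proof. by rewrite /in_U /in_M /ps_sub /ps_one => ->; rewrite subrr. Qed.

Lemma in_U_add1 x : in_M x -> in_U (ps_add (ps_one R) x).
Proof. by rewrite /in_U /in_M /ps_add /ps_one => ->; rewrite addr0. Qed.

Lemma in_U_mul u v : in_U u -> in_U v -> in_U (ps_mul u v).
Proof. by rewrite /in_U /ps_mul big_ord_recl big_ord0 /= => -> ->; rewrite mulr1 addr0. Qed.

Lemma in_M_mulr s x : in_M x -> in_M (ps_mul x s).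
Proof. by move=> x0; rewrite /in_M /ps_mul big_ord_recl big_ord0 /= x0 mul0r addr0. Qed.

Lemma ps_mul_lowl s t n k : (forall i, (i < n)%N -> s i = 0) -> (k < n)%N ->
  ps_mul s t k = 0.
Proof. by move=> s_low lt_kn; apply: big1 => -[i /= lt_ik] _; rewrite s_low ?mul0r //; lia. Qed.

Lemma ps_mul_lowr s t n k : (forall i, (i < n)%N -> t i = 0) -> (k < n)%N ->
  ps_mul s t k = 0.
Proof. by move=> t_low lt_kn; apply: big1 => -[i /= lt_ik] _; rewrite t_low ?mulr0 //; lia. Qed.

Definition ps_sum (t : nat -> ps R) : ps R := fun k => \sum_(n < k.+1) t n k.

Section SumOfSeries.
Variable t : nat -> ps R.
Hypothesis t_low : forall n k, (k < n)%N -> t n k = 0.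

Lemma sum_ps_coef m k : (k < m)%N -> \sum_(n < m) t n k = ps_sum t k.
Proof.
by move=> lt_km; apply/esym/(sum_ord_widen0 (G := fun n => t n k)) => // n; apply: t_low.
Qed.

Lemma series_sum_ps_sum : series_sum (fun n => (0%N, t n)) (ps_sum t).
Proof.
move=> [k|k]; last by exists 0%N => m _; rewrite big1.
exists k.+1 => m lt_km /=; rewrite -(sum_ps_coef lt_km).
by apply: eq_bigr => n _; rewrite /lcoef /= addn0.
Qed.

Lemma series_sum_ps_sumE S : series_sum (fun n => (0%N, t n)) S -> S = ps_sum t.
Proof.
move=> sum_S; apply: functional_extensionality => k.
have [m Hm] := sum_S (Posz k).
rewrite -[S k]/(pcoef S k) -(Hm (maxn m k.+1)) ?leq_maxl // -(sum_ps_coef (leq_maxr m k.+1)).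
by apply: eq_bigr => n _; rewrite /lcoef /= addn0.
Qed.

Lemma ps_trunc_sum n (T : nat -> {poly R}) :
  (forall m, eqmodXn n (ps_trunc n (t m)) (T m)) ->
  eqmodXn n (ps_trunc n (ps_sum t)) (\sum_(m < n) T m).
Proof.
move=> tT i lt_in; rewrite coef_ps_trunc // coef_sum -(sum_ps_coef lt_in).
by apply: eq_bigr => m _; rewrite -tT // coef_ps_trunc.
Qed.

End SumOfSeries.

Definition ps_eval a x : ps R := ps_sum (fun n k => a n * ps_exp x n k).

Lemma pseries_evalE a x S : in_M x -> pseries_eval a x S -> S = ps_eval a x.
Proof.
by move=> x0; apply: series_sum_ps_sumE => n k lt_kn; rewrite ps_exp_M_low ?mulr0.
Qed.

Lemma ps_trunc_eval n a x X : in_M x -> eqmodXn n (ps_trunc n x) X ->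
  eqmodXn n (ps_trunc n (ps_eval a x)) (\sum_(m < n) (a m)%:P * X ^+ m).
Proof.
move=> x0 xX; apply: (@ps_trunc_sum _ _ _ (fun m => (a m)%:P * X ^+ m)) => [m k lt_km|m].
  by rewrite ps_exp_M_low ?mulr0.
apply: (eqmodXn_trans (ps_truncZ (a m) (ps_exp x m))).
by apply: eqmodXnM => //; apply: eqmodXn_trans (ps_truncX x m) (eqmodXnX _ xX).
Qed.

Lemma ps_eval_low a x y N : (forall j, (j < N)%N -> x j = y j) ->
  forall j, (j < N)%N -> ps_eval a x j = ps_eval a y j.
Proof.
move=> xy j lt_jN; apply: eq_bigr => n _; congr (_ * _).
rewrite -!(coef_ps_trunc (n := j.+1) (ps_exp _ n)) // !(ps_truncX _ _ (ltnSn j)).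
suff -> : ps_trunc j.+1 x = ps_trunc j.+1 y by [].
by apply: eq_poly => i lt_ij; apply: xy; lia.
Qed.

Lemma eqmodXn_sum_widen (c : nat -> R) (X : {poly R}) m n : X`_0 = 0 -> (m <= n)%N ->
  eqmodXn m (\sum_(i < m) (c i)%:P * X ^+ i) (\sum_(i < n) (c i)%:P * X ^+ i).
Proof.
move=> X0 le_mn k lt_km; rewrite !coef_sum.
apply: (sum_ord_widen0 (G := fun i => ((c i)%:P * X ^+ i)`_k)) => // i le_mi.
by rewrite coefCM coef_expr_low ?mulr0 //; lia.
Qed.

End PowerSeriesTruncation.

Section CommutativeSeries.
Variable R : comNzRingType.
Implicit Types (s t u w : ps R) (a : nat -> R).

Lemma ps_exp_mul s t k : ps_exp (ps_mul s t) k = ps_mul (ps_exp s k) (ps_exp t k).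
Proof.
apply: ps_trunc_inj => n.
apply: eqmodXn_trans (ps_truncX _ _) _.
apply: eqmodXn_trans (eqmodXnX _ (ps_truncM _ _)) _.
rewrite exprMn; apply/eqmodXn_sym/(eqmodXn_trans (ps_truncM _ _)).
by apply: eqmodXnM; apply: ps_truncX.
Qed.

Lemma ps_eval_pi a : ps_eval a (ps_pi R) = a.
Proof.
apply: ps_trunc_inj => n; rewrite [X in eqmodXn _ _ X]ps_truncE.
exact: (ps_trunc_eval a (@in_M_pi R) (@ps_trunc_pi R n)).
Qed.

Definition ps_inv u : ps R := ps_eval (fun=> 1) (ps_sub (ps_one R) u).

Lemma ps_mulV u : in_U u -> ps_mul u (ps_inv u) = ps_one R.
Proof.
move=> u1; have y0 : in_M (ps_sub (ps_one R) u) by rewrite /in_M /ps_sub /ps_one u1 subrr.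
apply: ps_trunc_inj => n; set Y := ps_trunc n (ps_sub (ps_one R) u).
have uY : eqmodXn n (ps_trunc n u) (1 - Y).
  by move=> i lt_in; rewrite coefB coef1 !coef_ps_trunc // /ps_sub /ps_one opprB addrC subrK.
have invY := ps_trunc_eval (fun=> 1) y0 (eqmodXn_refl Y).
apply: eqmodXn_trans (ps_truncM _ _) _; apply: eqmodXn_trans (eqmodXnM uY invY) _.
apply/eqmodXn_sym/(eqmodXn_trans (@ps_trunc1 R n)).
rewrite (eq_bigr (fun i : 'I_n => Y ^+ i)) => [|i _]; last by rewrite mul1r.
have -> : (1 - Y) * \sum_(i < n) Y ^+ i = 1 - Y ^+ n.
  by rewrite -[1 - Y ^+ n]opprB subrX1 -mulNr opprB.
by move=> i lt_in; rewrite coefB coef_expr_low ?subr0 // coef0_ps_trunc_M.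
Qed.

Lemma ps_ball_decomp al u w : in_U al -> ps_mul (ps_pi R) w = ps_sub u al ->
  u = ps_mul al (ps_add (ps_one R) (ps_mul (ps_mul (ps_pi R) (ps_inv al)) w)).
Proof.
move=> al1 def_w; apply: ps_trunc_inj => n; apply: eqmodXn_sym.
set A := ps_trunc n al; set V := ps_trunc n (ps_inv al); set W := ps_trunc n w.
have AV : eqmodXn n (A * V) 1.
  apply: eqmodXn_trans (eqmodXn_sym (ps_truncM _ _)) _.
  by rewrite ps_mulV //; apply: ps_trunc1.
have uW : eqmodXn n (ps_trunc n u) (A + 'X * W).
  have XW : eqmodXn n (ps_trunc n (ps_mul (ps_pi R) w)) ('X * W).
    exact: eqmodXn_trans (ps_truncM _ _) (eqmodXnM (@ps_trunc_pi R n) (eqmodXn_refl W)).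
  rewrite def_w in XW; have := eqmodXn_trans (eqmodXn_sym XW) (ps_truncB (n := n) u al).
  by move=> e i lt_in; rewrite coefD e // coefB; ring.
apply: eqmodXn_trans (ps_truncM _ _) _.
apply: (@eqmodXn_trans _ _ _ (A * (1 + 'X * V * W))).
  apply: eqmodXnM => //; apply: eqmodXn_trans (ps_truncD _ _) (eqmodXnD (@ps_trunc1 R n) _).
  apply: eqmodXn_trans (ps_truncM _ _) (eqmodXnM _ (eqmodXn_refl W)).
  exact: eqmodXn_trans (ps_truncM _ _) (eqmodXnM (@ps_trunc_pi R n) (eqmodXn_refl V)).
have -> : A * (1 + 'X * V * W) = A + (A * V) * ('X * W) by ring.
apply: eqmodXn_trans (eqmodXnD (eqmodXn_refl A) (eqmodXnM AV (eqmodXn_refl _))) _.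
by rewrite mul1r; apply: eqmodXn_sym.
Qed.

End CommutativeSeries.

Section Taylor.
Variable R : comNzRingType.
Implicit Types (c : nat -> R) (W : {poly R}).

Lemma nderivn_ps_trunc c n m :
  (ps_trunc n c)^`N(m) = \sum_(i < n) (c i)%:P * 'X^(i - m) *+ 'C(i, m).
Proof.
rewrite ps_truncE linear_sum; apply: eq_bigr => i _.
by rewrite !mul_polyC linearZ /= nderivnXn scalerMnr.
Qed.

Lemma taylor_ps_trunc c n W :
  \sum_(i < n) (c i)%:P * ('X + W) ^+ i = \sum_(m < n) W ^+ m * (ps_trunc n c)^`N(m).
Proof.
under eq_bigr => i _ do rewrite exprDn mulr_sumr.
under [RHS]eq_bigr => m _ do rewrite nderivn_ps_trunc mulr_sumr.
rewrite [RHS]exchange_big /=; apply: eq_bigr => i _.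
rewrite (sum_ord_widen0 (n := n) (G := fun m => (c i)%:P * ('X ^+ (i - m) * W ^+ m *+ 'C(i, m)))).
- by apply: eq_bigr => m _; rewrite !mulrnAr (mulrC ('X ^+ _)) mulrCA.
- exact: ltn_ord.
- by move=> m lt_im; rewrite bin_small ?mulr0n ?mulr0.
Qed.

Lemma nderivn_ps_trunc_hasse c n m :
  eqmodXn (n - m) ((ps_trunc n c)^`N(m)) (ps_trunc n (hasse c m)).
Proof.
move=> j lt_j; rewrite coef_nderivn !coef_ps_trunc; try lia.
by rewrite /hasse addnC mulr_natl.
Qed.

Lemma coef_sum_XnM (D : nat -> {poly R}) n N m i : (i < N)%N -> (m < n)%N ->
  (forall k, (k < m)%N -> (D k)`_(N * m + i - N * k) = 0) ->
  (\sum_(k < n) 'X^(N * k) * D k)`_(N * m + i) = (D m)`_i.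
Proof.
move=> lt_iN lt_mn D_low; rewrite coef_sum (bigD1 (Ordinal lt_mn)) //= coefXnM.
rewrite ltnNge leq_addr /= addKn big1 ?addr0 // => -[k /= lt_kn] ne_km.
have {ne_km} ne : k <> m by move=> e; move: ne_km; rewrite -val_eqE /= e eqxx.
rewrite coefXnM; case: ltnP => // le_Nk.
have lt_km : (k < m)%N.
  rewrite ltnNge; apply/negP => le_mk.
  have : (N * m.+1 <= N * k)%N by rewrite leq_mul2l; apply/orP; right; lia.
  by rewrite mulnS; lia.
exact: D_low.
Qed.

End Taylor.

Section HasseIdentity.
Variable R : comNzRingType.
Variables (f : ps R -> ps R) (a : nat -> R).
Hypothesis f_mul : forall u v, in_U u -> in_U v -> f (ps_mul u v) = ps_mul (f u) (f v).
Hypothesis f_eval : forall u, in_U u -> f u = ps_eval a (ps_sub u (ps_one R)).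

Lemma f_eval_trunc n x X : in_M x -> eqmodXn n (ps_trunc n x) X ->
  eqmodXn n (ps_trunc n (f (ps_add (ps_one R) x))) (\sum_(i < n) (a i)%:P * X ^+ i).
Proof.
by move=> x0 xX; rewrite f_eval ?ps_sub1_add1; [apply: ps_trunc_eval | apply: in_U_add1].
Qed.

Lemma functional_eq_trunc n N : (0 < N)%N ->
  eqmodXn n (\sum_(i < n) (a i)%:P * ('X + 'X^N * (1 + 'X)) ^+ i)
            (ps_trunc n a * \sum_(i < n) (a i)%:P * 'X^N ^+ i).
Proof.
move=> N_gt0; set x := ps_pi R; set y := ps_exp x N.
have x0 : in_M x := in_M_pi R.
have y0 : in_M y := ps_exp_M_low x0 N_gt0.
have Xy : eqmodXn n (ps_trunc n y) 'X^N.
  exact: eqmodXn_trans (ps_truncX x N) (eqmodXnX N (@ps_trunc_pi R n)).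
have xy0 : in_M (ps_sub (ps_mul (ps_add (ps_one R) x) (ps_add (ps_one R) y)) (ps_one R)).
  by apply/in_M_sub1/in_U_mul; apply: in_U_add1.
have f_xy := f_mul (in_U_add1 x0) (in_U_add1 y0).
have -> : 'X + 'X^N * (1 + 'X) = (1 + 'X) * (1 + 'X^N) - 1 :> {poly R} by ring.
apply: eqmodXn_trans (eqmodXn_sym (f_eval_trunc xy0 _)) _.
- apply: (eqmodXn_trans (ps_truncB _ _)); apply: eqmodXnB; last exact: ps_trunc1.
  apply: (eqmodXn_trans (ps_truncM _ _)); apply: eqmodXnM.
  + exact: eqmodXn_trans (ps_truncD _ _) (eqmodXnD (@ps_trunc1 R n) (@ps_trunc_pi R n)).
  + exact: eqmodXn_trans (ps_truncD _ _) (eqmodXnD (@ps_trunc1 R n) Xy).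
- rewrite -ps_add1_sub1 f_xy; apply: (eqmodXn_trans (ps_truncM _ _)).
  apply: eqmodXnM; last exact: f_eval_trunc y0 Xy.
  by rewrite [ps_trunc n a]ps_truncE; apply: f_eval_trunc x0 (@ps_trunc_pi R n).
Qed.

Lemma hasse_identity m n :
  eqmodXn n ((1 + 'X) ^+ m * ps_trunc n (hasse a m)) ((a m)%:P * ps_trunc n a).
Proof.
elim/ltn_ind: m n => m IH n i lt_in.
(* With y = pi^N and N > i, the coefficient of X^(N m + i) in sum_k y^k D_k only sees
   D_m: the blocks k < m vanish there by induction, those k > m start beyond it. *)
pose N := i.+1; pose n' := (N * m + i.+1)%N; pose A := ps_trunc n' a.
pose D k := (1 + 'X) ^+ k * A^`N(k) - (a k)%:P * A.
have D_sum : eqmodXn n' (\sum_(k < n') 'X^(N * k) * D k) 0.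
  have := functional_eq_trunc (n := n') (ltn0Sn i); rewrite (taylor_ps_trunc a n') => e.
  have -> : \sum_(k < n') 'X^(N * k) * D k = \sum_(k < n') ('X^N * (1 + 'X)) ^+ k * A^`N(k)
                                            - A * \sum_(k < n') (a k)%:P * 'X^N ^+ k.
    by rewrite mulr_sumr -sumrB; apply: eq_bigr => k _; rewrite /D exprMn -exprM; ring.
  by move=> j lt_j; rewrite coefB e // subrr coef0.
have D_low k : (k < m)%N -> (D k)`_(N * m + i - N * k) = 0.
  move=> lt_km; have le_Nk : (N * k <= N * m)%N by rewrite leq_mul2l ltnW ?orbT.
  have lt_j : (N * m + i - N * k < n' - k)%N by rewrite /n'; nia.
  rewrite coefB (eqmodXnM (eqmodXn_refl _) (@nderivn_ps_trunc_hasse R a n' k)) //.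
  by rewrite IH ?subrr //; apply: leq_trans lt_j (leq_subr _ _).
have lt_mn' : (m < n')%N by rewrite /n'; nia.
have lt_top : (N * m + i < n')%N by rewrite /n' addnS ltnS.
have := D_sum _ lt_top.
rewrite coef_sum_XnM // coef0 /D coefB => /eqP; rewrite subr_eq0 => /eqP Dm.
have hasse_m : eqmodXn i.+1 (ps_trunc n (hasse a m)) (A^`N(m)).
  apply: (@eqmodXn_trans _ _ _ (ps_trunc n' (hasse a m))).
    by apply: eqmodXn_ps_trunc => //; rewrite /n'; nia.
  by apply/eqmodXn_sym/(eqmodXnW _ (@nderivn_ps_trunc_hasse R a n' m)); rewrite /n'; nia.
have a_m : eqmodXn i.+1 (ps_trunc n a) A by apply: eqmodXn_ps_trunc => //; rewrite /n'; nia.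
rewrite (eqmodXnM (eqmodXn_refl _) hasse_m (ltnSn i)) Dm.
by rewrite (eqmodXnM (eqmodXn_refl _) a_m (ltnSn i)).
Qed.

Lemma hasse_eq0P m : a m = 0 <-> hasse a m = ps_zero R.
Proof.
split=> [am0 | /(congr1 (fun s => s 0%N))]; last by rewrite /hasse add0n binn mul1r.
apply: ps_trunc_inj => n; apply: (@eqmodXn_trans _ _ _ 0); last first.
  by move=> i lt_in; rewrite coef0 coef_ps_trunc.
have unit_1X : (1 + 'X : {poly R})`_0 = 1 by rewrite coefD coef1 coefX addr0.
apply: (eqmodXn_unit_mul0 (coef0_expr1 m unit_1X)).
by move=> i lt_in; rewrite (hasse_identity m lt_in) am0 mul0r coef0.
Qed.

End HasseIdentity.

Section Frobenius.
Variables (F : idomainType) (p : nat).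
Hypothesis pcharFp : p \in [pchar F].
Implicit Types (s t x : ps F) (a : nat -> F).

Let p_gt0 : (0 < p)%N.
Proof. exact: prime_gt0 (pcharf_prime pcharFp). Qed.

Let pcharFpX : p \in [pchar {poly F}].
Proof. by rewrite pchar_poly. Qed.

Lemma ps_exp_pchar_inj s t : ps_exp s p = ps_exp t p -> s = t.
Proof.
move=> st; apply: functional_extensionality => k; elim/ltn_ind: k => k IH.
pose n := (p * k).+1; have lt_kn : (k < n)%N by rewrite ltnS leq_pmull.
pose Y := ps_trunc n s - ps_trunc n t.
have Y_low j : (j < k)%N -> Y`_j = 0.
  by move=> lt_jk; rewrite coefB !coef_ps_trunc ?IH ?subrr //; apply: ltn_trans lt_kn.
have [_ Yk] := coef_expr_valuation Y_low p.
have : (Y ^+ p)`_(p * k) = 0.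
  rewrite /Y -!(pFrobenius_autE pcharFpX) rmorphB /= !(pFrobenius_autE pcharFpX) coefB.
  by rewrite -!(ps_truncX _ _ (ltnSn _)) st subrr.
rewrite Yk => /eqP; rewrite expf_eq0 p_gt0 coefB !coef_ps_trunc // subr_eq0.
by move/eqP.
Qed.

Lemma ps_eval_pchar a : (forall n, exists m : nat, a n = m%:R) ->
  (forall n, ~~ (p %| n)%N -> a n = 0) ->
  forall x, in_M x -> ps_eval a x = ps_exp (ps_eval (fun k => a (p * k)%N) x) p.
Proof.
move=> a_Fp a_dvd x x0; apply: ps_trunc_inj => n.
set X := ps_trunc n x; have X0 : X`_0 = 0 by apply: coef0_ps_trunc_M.
apply: eqmodXn_trans (ps_trunc_eval a x0 (eqmodXn_refl X)) _.
apply/eqmodXn_sym/(eqmodXn_trans (ps_truncX _ _)).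
apply: eqmodXn_trans (eqmodXnX _ (ps_trunc_eval _ x0 (eqmodXn_refl X))) _.
rewrite -(pFrobenius_autE pcharFpX) rmorph_sum.
rewrite (eq_bigr (fun k : 'I_n => (a (p * k)%N)%:P * X ^+ (p * k))) => [|k _]; last first.
  rewrite /= (pFrobenius_autE pcharFpX) exprMn -polyC_exp -exprM (mulnC k p).
  by have [m ->] := a_Fp (p * k)%N; rewrite -(pFrobenius_autE pcharFp) rmorph_nat.
rewrite -(sum_ord_multiples (G := fun k => (a k)%:P * X ^+ k)) // => [|k /a_dvd ->]; last first.
  by rewrite mul0r.
by apply/eqmodXn_sym/eqmodXn_sum_widen; rewrite ?leq_pmull.
Qed.

Lemma hasse1_eq0_pchar a : hasse a 1 = ps_zero F -> forall n, ~~ (p %| n)%N -> a n = 0.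
Proof.
move=> h1 [|n]; first by rewrite dvdn0.
move=> p_ndvd; have /eqP := congr1 (fun s => s n) h1.
by rewrite /hasse addn1 bin1 mulf_eq0 -(dvdn_pcharf pcharFp) (negbTE p_ndvd) => /eqP.
Qed.

Lemma ps_exp_pchar_coef1 s : in_U s -> ps_exp s p 1 = 0.
Proof.
move=> s1; rewrite -(coef_ps_trunc (n := 2)) // (ps_truncX _ _ (ltnSn 1)).
by rewrite coef1_expr1 ?(pcharf0 pcharFp) ?mul0r // coef_ps_trunc.
Qed.

End Frobenius.

Section PowerSeriesEndomorphisms.
Variable R : comNzRingType.
Variables (h : ps R -> ps R) (b : nat -> R).
Hypothesis b0 : b 0%N = 1.
Hypothesis h_eval : forall u, in_U u -> h u = ps_eval b (ps_sub u (ps_one R)).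
Hypothesis h_mul : forall u v, in_U u -> in_U v -> h (ps_mul u v) = ps_mul (h u) (h v).

Lemma in_ball_pi_U (al u : ps R) : in_U al -> in_ball al (ps_pi R) u -> in_U u.
Proof.
move=> al1 /(_ 0%N) u_al; apply/eqP; rewrite -al1 -subr_eq0 u_al //.
by move=> j; rewrite leqn0 => /eqP ->.
Qed.

Lemma eval_continuous_on_ball al : in_U al -> continuous_on_ball h al (ps_pi R).
Proof.
move=> al1 u u_al N; exists N => v v_al uv i lt_iN.
rewrite !h_eval; try exact: in_ball_pi_U al1 _.
apply: (@ps_eval_low R b (ps_sub u (ps_one R)) (ps_sub v (ps_one R)) N) => // j lt_jN.
by rewrite /ps_sub uv.
Qed.

Lemma eval_analytic_on_ball al : in_U al -> analytic_on_ball h al (ps_pi R).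
Proof.
move=> al1; split; first exact: eval_continuous_on_ball.
set z := ps_mul (ps_pi R) (ps_inv al); have z0 : in_M z := in_M_mulr _ (in_M_pi R).
(* h u = h al * h (1 + z w), with w = (u - al) / pi, is a power series in w. *)
set c := fun n k => b n * ps_mul (h al) (ps_exp z n) k.
have c_low n k : (k < n)%N -> c n k = 0.
  by move=> lt_kn; rewrite /c (ps_mul_lowr _ _ lt_kn) ?mulr0 // => i; apply: ps_exp_M_low.
exists (fun n => (0%N, c n)); split.
  move=> B; exists B => n le_Bn [k|k] lt_kB //=.
  by rewrite /lcoef /= addn0 c_low //; move: lt_kB; rewrite ltz_nat; lia.
move=> u w u_al def_w.
have t_low n k : (k < n)%N -> ps_mul (c n) (ps_exp w n) k = 0.
  by move=> lt_kn; apply: ps_mul_lowl lt_kn => i /c_low.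
suff -> : h u = ps_sum (fun n => ps_mul (c n) (ps_exp w n)) by apply: series_sum_ps_sum.
have zw0 : in_M (ps_mul z w) by apply: in_M_mulr.
have zw1 : in_U (ps_add (ps_one R) (ps_mul z w)) := in_U_add1 zw0.
rewrite (ps_ball_decomp al1 def_w) (h_mul al1 zw1) (h_eval zw1) ps_sub1_add1.
apply: ps_trunc_inj => n; set H := ps_trunc n (h al); set Z := ps_trunc n z.
set W := ps_trunc n w.
apply: eqmodXn_trans (ps_truncM _ _) _.
apply: eqmodXn_trans (eqmodXnM (eqmodXn_refl H) (ps_trunc_eval b zw0 (ps_truncM z w))) _.
apply: eqmodXn_sym.
apply: (eqmodXn_trans (@ps_trunc_sum R (fun k => ps_mul (c k) (ps_exp w k)) t_low n
                         (fun k => (b k)%:P * (H * Z ^+ k) * W ^+ k) _)).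
  move=> k; apply: eqmodXn_trans (ps_truncM _ _) (eqmodXnM _ (ps_truncX _ _)).
  apply: eqmodXn_trans (ps_truncZ _ _) (eqmodXnM (eqmodXn_refl _) _).
  exact: eqmodXn_trans (ps_truncM _ _) (eqmodXnM (eqmodXn_refl H) (ps_truncX _ _)).
suff -> : \sum_(k < n) (b k)%:P * (H * Z ^+ k) * W ^+ k
          = H * \sum_(k < n) (b k)%:P * (Z * W) ^+ k by [].
by rewrite mulr_sumr; apply: eq_bigr => k _; rewrite exprMn; ring.
Qed.

Lemma in_Lambda_eval : in_Lambda h.
Proof.
split; first split=> // u u1.
  by rewrite h_eval // /in_U /ps_eval /ps_sum big_ord1 b0 mul1r.
move=> al al1; exists (ps_pi R); split; first exact: ps_pi_neq0.
by split=> [u|]; [apply: in_ball_pi_U | apply: eval_analytic_on_ball].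
Qed.

End PowerSeriesEndomorphisms.

Unset Implicit Arguments.

Theorem lemma2p2 (F : finFieldType) (p : nat) (hp : p \in [pchar F])
  (f : ps F -> ps F) (hf : in_Lambda f) (a : nat -> F)
  (ha0 : a 0%N = 1) (haFp : forall n, exists m : nat, a n = m%:R)
  (hfa : forall x, in_M x -> pseries_eval a x (f (ps_add (ps_one F) x))) :
  (forall n : nat, a n = 0 <-> hasse a n = ps_zero F) /\
  (a 1%N = 0 <-> exists g : ps F -> ps F, in_Lambda g /\
     forall x, in_M x ->
       f (ps_add (ps_one F) x) = ps_exp (g (ps_add (ps_one F) x)) p).
Proof.
have [[_ f_mul] _] := hf.
have f_eval u : in_U u -> f u = ps_eval a (ps_sub u (ps_one F)).
  move=> u1; rewrite {1}(ps_add1_sub1 u).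
  by apply: pseries_evalE (hfa _ _); apply: in_M_sub1.
have hasse_eq0 := hasse_eq0P f_mul f_eval.
split=> //; split=> [a1_eq0 | [g [[[g_U _] _] f_gp]]].
  have a_dvd := hasse1_eq0_pchar hp ((hasse_eq0 1%N).1 a1_eq0).
  pose g u := ps_eval (fun k => a (p * k)%N) (ps_sub u (ps_one F)).
  have f_gp u : in_U u -> f u = ps_exp (g u) p.
    by move=> u1; rewrite f_eval // (ps_eval_pchar hp haFp a_dvd (in_M_sub1 u1)).
  exists g; split=> [|x x0]; last exact/f_gp/in_U_add1.
  apply: (in_Lambda_eval (b := fun k => a (p * k)%N)) => // [|u v u1 v1].
    by rewrite muln0.
  apply: (ps_exp_pchar_inj hp); rewrite ps_exp_mul -!f_gp ?f_mul //; exact: in_U_mul.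
have pi1 := in_U_add1 (in_M_pi F).
have := congr1 (fun s => s 1%N) (f_gp _ (in_M_pi F)).
by rewrite (f_eval _ pi1) ps_sub1_add1 ps_eval_pi (ps_exp_pchar_coef1 hp (g_U _ pi1)).
Qed.
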